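(* Let $q$ be a prime power, $1\le \ell\le m$, $V=\mathbb F_q^m$, and let $C(\ell,m)$, $\tau$, $n$ and $g(\cdot)$ be as defined below. Let $D$ be a subspace of $C(\ell,m)$ with $s=\dim D$, and let $\mathcal D=\tau^{-1}(D)\subseteq\bigwedge^{m-\ell}V$. Then $\mathcal E:=\{\omega'\in\bigwedge^{\ell}V:\omega'\wedge\omega=0\text{ for all }\omega\in\mathcal D\}$ is a subspace of $\bigwedge^{\ell}V$ of codimension $s$, and $\|D\|=n-g(\mathcal E)$.
   Context: Fix a basis $e_1,\dots,e_m$ of $V$ and identify $\bigwedge^mV$ with $\mathbb F_q$ via $e_1\wedge\cdots\wedge e_m=1$. Let $n=\left[{m\atop \ell}\right]_q$ be the number of $\ell$-dimensional subspaces of $V$, and fix representatives $\omega'_1,\dots,\omega'_n\in\bigwedge^{\ell}V$, where $\omega'_i=v_1\wedge\cdots\wedge v_\ell$ for a basis $v_1,\dots,v_\ell$ of the $i$-th $\ell$-dimensional subspace; let $T(\ell,m)=\{\omega'_1,\dots,\omega'_n\}$. $\tau:\bigwedge^{m-\ell}V\to\mathbb F_q^n$, $\tau(\omega)=(\omega'_1\wedge\omega,\dots,\omega'_n\wedge\omega)$, is injective, and $C(\ell,m)=\tau(\bigwedge^{m-\ell}V)$. For a subspace $\mathcal E$ of $\bigwedge^{\ell}V$, $g(\mathcal E)=|\mathcal E\cap T(\ell,m)|$. For $D\subseteq\mathbb F_q^n$, $\|D\|$ is the number of coordinates $i$ such that $x_i\ne0$ for some $x\in D$. *)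

From HB Require Import structures.
From mathcomp Require Import all_boot all_order all_algebra.
Set Implicit Arguments. Unset Strict Implicit. Unset Printing Implicit Defensive.
Import Order.TTheory GRing.Theory.
Local Open Scope ring_scope.

Section Wedge.
Variables (F : finFieldType) (m : nat).

(* k-subsets of {0,...,m-1}: index set of the standard basis e_S of /\^k V *)
Definition ksub (k : nat) := {S : {set 'I_m} | #|S| == k}.

(* /\^k V, in coordinates w.r.t. the basis e_S = e_{s_1} /\ ... /\ e_{s_k},
   s_1 < ... < s_k *)
Definition wedge (k : nat) := {ffun ksub k -> F^o}.

(* sign of e_S /\ e_T relative to e_1 /\ ... /\ e_m : (-1)^(#inversions) *)
Definition wsign (S T : {set 'I_m}) : F :=
  (-1) ^+ #|[set p : 'I_m * 'I_m | [&& p.1 \in S, p.2 \in T & (p.2 < p.1)%N]]|.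

(* the pairing /\^a V x /\^b V -> /\^m V = F, with e_1 /\ ... /\ e_m = 1 *)
Definition wedge_top (a b : nat) (x : wedge a) (y : wedge b) : F :=
  \sum_(S : ksub a) \sum_(T : ksub b)
     (if [disjoint val S & val T] then wsign (val S) (val T) * x S * y T else 0).

(* v_1 /\ ... /\ v_k where v_i is the i-th row of A: coordinate on e_S is the
   k x k minor of A on the columns of S (taken in increasing order) *)
Definition dec (k : nat) (A : 'M[F]_(k, m)) : wedge k :=
  [ffun S : ksub k => \det (\matrix_(i < k, j < k)
      (if onth (enum (val S)) j is Some x then A i x else 0))].

(* the l-dimensional subspaces of V = 'rV_m, via canonical row-space matrices *)
Definition subsp (l : nat) := {A : 'M[F]_m | (<<A>>%MS == A) && (\rank A == l)}.

(* tau : /\^(m-l) V -> F^n, given the chosen bases rep W of the subspaces W *)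
Definition tau (l : nat) (rep : subsp l -> 'M[F]_(l, m)) (w : wedge (m - l))
  : {ffun subsp l -> F^o} :=
  [ffun W => wedge_top (dec (rep W)) w].

Definition supp_size (I : finType) (D : {vspace {ffun I -> F^o}}) : nat :=
  #|[set i : I | [exists x : {ffun I -> F^o}, (x \in D) && (x i != 0)]]|.

End Wedge.

(* The top pairing /\^l V x /\^(m-l) V -> /\^m V = F is perfect: e_S pairs to
   +-1 with e_(~S) and to 0 with every other basis vector.  Hence E, the annihilator
   of Dw = tau^-1(D), has codimension dim Dw.  The map tau is injective, because
   the coordinate subspace spanned by the e_i, i in S, has decomposable
   representative a nonzero multiple of e_S, so tau w recovers every coordinate
   of w; as D lies in the image of tau, dim Dw = dim D.  Finally the W-th
   coordinate vanishes on all of D exactly when dec (rep W) pairs to zero with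
   Dw, i.e. lies in E, so ||D|| counts the W outside E. *)

From HB Require Import structures.
From mathcomp Require Import all_boot all_order all_algebra ring.
Set Implicit Arguments. Unset Strict Implicit. Unset Printing Implicit Defensive.
Import GRing.Theory.
Local Open Scope ring_scope.

Section Annihilator.
Variables (K : fieldType) (X Y : vectType K) (f : {bilinear X -> Y -> K^o}).

Definition pairing_row (U : {vspace Y}) (x : X) : 'rV[K]_(\dim U) :=
  \row_i f x (vbasis U)`_i.

Lemma pairing_row_is_linear U : linear (pairing_row U).
Proof. by move=> c x x'; apply/rowP => i; rewrite !mxE linearPl. Qed.

HB.instance Definition _ U := GRing.isSemilinear.Build K X _ _ (pairing_row U)
  (GRing.semilinear_linear (@pairing_row_is_linear U)).

Definition annihilator (U : {vspace Y}) : {vspace X} := lker (linfun (pairing_row U)).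

Lemma mem_annihilator (U : {vspace Y}) x :
  reflect {in U, forall y, f x y = 0} (x \in annihilator U).
Proof.
rewrite memv_ker lfunE; apply: (iffP eqP) => [fx0 y /coord_vbasis ->|fU0].
  rewrite linear_sumr big1 // => i _; rewrite linearZr /=.
  by have /rowP/(_ i) := fx0; rewrite !mxE => ->; rewrite scaler0.
by apply/rowP => i; rewrite !mxE fU0 // vbasis_mem // mem_nth // size_tuple.
Qed.

Hypothesis f_nondeg : forall y, (forall x, f x y = 0) -> y = 0.

Lemma limg_pairing_row U : limg (linfun (pairing_row U)) = fullv.
Proof.
pose e := vbasis {:X}; pose b := vbasis U.
(* Nondegeneracy makes the columns of this Gram matrix independent. *)
pose G := \matrix_(i < \dim {:X}, j < \dim U) f e`_i b`_j.
have pairing_rowG (r : 'rV_(\dim {:X})) : pairing_row U (\sum_i r 0 i *: e`_i) = r *m G.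
  apply/rowP => j; rewrite !mxE linear_sumlz.
  by apply: eq_bigr => i _; rewrite linearZl mxE.
have /row_fullP[B BG1] : row_full G.
  rewrite /row_full -mxrank_tr; apply/inj_row_free => a aG0.
  have comb0 : \sum_j a 0 j *: b`_j = 0.
    apply: f_nondeg => x; rewrite (coord_vbasis (memvf x)) linear_sumlz big1 // => i _.
    have /rowP/(_ i) := aG0; rewrite !mxE => aGi0.
    rewrite linearZl linear_sumr.
    have -> : \sum_j f e`_i (a 0 j *: b`_j) = \sum_j a 0 j * G^T j i.
      by apply: eq_bigr => j _; rewrite linearZr !mxE.
    by rewrite aGi0; apply: scaler0.
  by apply/rowP => j; rewrite mxE (freeP (basis_free (vbasisP U)) _ comb0).
apply/eqP; rewrite eqEsubv subvf; apply/subvP => y _.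
rewrite -[y]mulmx1 -BG1 mulmxA -pairing_rowG -(lfunE (pairing_row U)).
exact/memv_img/memvf.
Qed.

Lemma dim_annihilator U : (\dim (annihilator U) + \dim U)%N = \dim {:X}.
Proof.
rewrite -(limg_ker_dim (linfun (pairing_row U)) fullv) capfv limg_pairing_row dimvf.
by rewrite dim_matrix mul1r.
Qed.

End Annihilator.

Lemma dim_lpreim (K : fieldType) (aT rT : vectType K) (g : 'Hom(aT, rT))
    (U : {vspace rT}) :
  lker g == 0%VS -> (U <= limg g)%VS -> \dim (g @^-1: U) = \dim U.
Proof. by move=> /eqP g0 Ug; rewrite -{2}(lpreimK Ug) limg_dim_eq // g0 capv0. Qed.

Section Wedge.
Variables (F : finFieldType) (m : nat).

Lemma wedge_top_is_bilinear a b : bilinear_for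
  (GRing.Scale.Law.clone _ _ *:%R _) (GRing.Scale.Law.clone _ _ *:%R _)
  (@wedge_top F m a b : _ -> _ -> F^o).
Proof.
split=> [y|x] c u v; rewrite [in RHS]/GRing.scale /= /wedge_top mulr_sumr -big_split;
  apply: eq_bigr => S _; rewrite mulr_sumr -big_split; apply: eq_bigr => T _;
  rewrite !ffunE; case: ifP => _; rewrite ?mulr0 ?addr0 // /GRing.scale /=; ring.
Qed.

HB.instance Definition _ a b := bilinear_isBilinear.Build F (wedge F m a) (wedge F m b)
  F^o _ _ (@wedge_top F m a b : _ -> _ -> F^o) (wedge_top_is_bilinear a b).

Definition wbasis k (S : ksub m k) : wedge F m k := [ffun T => (T == S)%:R].

Lemma wsign_neq0 (S T : {set 'I_m}) : wsign F S T != 0.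
Proof. by rewrite /wsign expf_neq0 // oppr_eq0 oner_eq0. Qed.

Lemma wedge_top_wbasis_compl a b (S : ksub m a) (T : ksub m b) (y : wedge F m b) :
  val S = ~: val T -> wedge_top (wbasis S) y = wsign F (val S) (val T) * y T.
Proof.
move=> /= defS; rewrite /wedge_top (bigD1 S) //= [X in _ + X]big1 ?addr0; last first.
  move=> S' /negbTE S'S; apply: big1 => T' _.
  by rewrite ffunE S'S mulr0 mul0r if_same.
rewrite (bigD1 T) //= [X in _ + X]big1 ?addr0; last first.
  move=> T' T'T; case: ifP => //.
  rewrite defS disjoint_sym disjoints_subset setCK => sT'T.
  case/eqP: T'T; apply: val_inj; apply/eqP.
  by rewrite eqEcard sT'T (eqP (valP T)) (eqP (valP T')) leqnn.
by rewrite defS disjoint_sym disjoints_subset setCK subxx ffunE eqxx mulr1.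
Qed.

Lemma ksub_compl a b (T : ksub m b) :
  (a + b = m)%N -> exists S : ksub m a, val S = ~: val T.
Proof.
move=> abm; have cardC : #|~: val T| == a.
  by rewrite cardsCs setCK card_ord (eqP (valP T)) -abm addnK.
by exists (exist (fun S : {set _} => #|S| == a) _ cardC).
Qed.

Lemma wedge_top_wbasis_nondeg a b (y : wedge F m b) : (a + b = m)%N ->
  (forall S : ksub m a, wedge_top (wbasis S) y = 0) -> y = 0.
Proof.
move=> abm y0; apply/ffunP => T; have [S defS] := ksub_compl T abm.
have /eqP := y0 S; rewrite (wedge_top_wbasis_compl _ defS) mulf_eq0.
by rewrite (negbTE (wsign_neq0 _ _)) ffunE => /eqP.
Qed.

Lemma wedge_top_nondeg l (y : wedge F m (m - l)) : (l <= m)%N ->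
  (forall x : wedge F m l, wedge_top x y = 0) -> y = 0.
Proof.
move=> lm y0; apply: (@wedge_top_wbasis_nondeg l) => [|S].
  exact: subnKC.
exact: y0.
Qed.

End Wedge.

Section Decomposable.
Variables (F : finFieldType) (m k : nat).
Implicit Types (S T : ksub m k) (A B : 'M[F]_(k, m)).

Definition ksub_nth S (j : 'I_k) : 'I_m :=
  enum_val (cast_ord (esym (eqP (valP S))) j).

Lemma ksub_nth_inj S : injective (ksub_nth S).
Proof. by move=> i j /enum_val_inj /cast_ord_inj. Qed.

Lemma mem_ksub_nth S (j : 'I_k) : ksub_nth S j \in val S.
Proof. exact: enum_valP. Qed.

Lemma ksub_nthP S x : x \in val S -> exists j, ksub_nth S j = x.
Proof.
move=> Sx; exists (cast_ord (eqP (valP S)) (enum_rank_in Sx x)).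
by rewrite /ksub_nth cast_ordK enum_rankK_in.
Qed.

Lemma size_enum_ksub S : size (enum (val S)) = k.
Proof. by rewrite -cardE (eqP (valP S)). Qed.

Lemma onth_ksub_nth S (j : 'I_k) : onth (enum (val S)) j = Some (ksub_nth S j).
Proof.
rewrite onthE (nth_map (ksub_nth S j)) ?size_enum_ksub //.
by rewrite [in RHS]/ksub_nth (enum_val_nth (ksub_nth S j)).
Qed.

(* The rows of (colsel S)^T are the unit vectors e_i, i in S. *)
Definition colsel S : 'M[F]_(m, k) := \matrix_(x, j) (x == ksub_nth S j)%:R.

Lemma dec_colsel A S : dec A S = \det (A *m colsel S).
Proof.
rewrite ffunE; congr (\det _); apply/matrixP => i j; rewrite !mxE onth_ksub_nth.
rewrite (bigD1 (ksub_nth S j)) //= mxE eqxx mulr1 big1 ?addr0 // => x /negbTE xj.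
by rewrite mxE xj mulr0.
Qed.

Lemma dec_mulmx (P : 'M[F]_k) A : dec (P *m A) = \det P *: dec A.
Proof. by apply/ffunP => S; rewrite [in RHS]ffunE !dec_colsel -mulmxA det_mulmx. Qed.

Lemma dec_submx A B : row_free A -> (A <= B)%MS ->
  exists2 c, c != 0 & dec A = c *: dec B.
Proof.
move=> freeA /submxP[P defA]; exists (\det P); last by rewrite defA dec_mulmx.
rewrite -unitfE -unitmxE -row_free_unit -row_leq_rank.
by have := mxrankM_maxl P B; rewrite -defA (eqP freeA).
Qed.

Lemma colsel_trmx_mul S T :
  (colsel S)^T *m colsel T = \matrix_(i, j) (ksub_nth S i == ksub_nth T j)%:R.
Proof.
apply/matrixP => i j; rewrite !mxE (bigD1 (ksub_nth S i)) //= !mxE eqxx mul1r.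
by rewrite big1 ?addr0 // => x /negbTE xi; rewrite !mxE xi mul0r.
Qed.

Lemma colsel_trmxK S : (colsel S)^T *m colsel S = 1%:M.
Proof.
by apply/matrixP => i j; rewrite colsel_trmx_mul !mxE (inj_eq (@ksub_nth_inj S)).
Qed.

Lemma row_free_colsel_tr S : row_free (colsel S)^T.
Proof. by rewrite -row_leq_rank -{1}(mxrank1 F k) -(colsel_trmxK S) mxrankM_maxl. Qed.

Lemma dec_colsel_tr S : dec (colsel S)^T = wbasis F S.
Proof.
apply/ffunP => T; rewrite dec_colsel ffunE.
have [->|neTS] := eqVneq T S; first by rewrite colsel_trmxK det1.
have [x xT xNS] : exists2 x, x \in val T & x \notin val S.
  apply/subsetPn; apply: contra neTS => sTS; apply/eqP/val_inj/eqP.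
  by rewrite eqEcard sTS (eqP (valP S)) (eqP (valP T)) leqnn.
have [j defx] := ksub_nthP xT; rewrite -{}defx in xNS.
rewrite (expand_det_col _ j) big1 // => i _.
rewrite colsel_trmx_mul mxE; case: eqP => [eij|]; last by rewrite mul0r.
by rewrite -eij mem_ksub_nth in xNS.
Qed.

End Decomposable.

Section Tau.
Variables (F : finFieldType) (m l : nat) (rep : subsp F m l -> 'M[F]_(l, m)).

Lemma tau_is_linear : linear (tau rep).
Proof. by move=> c w w'; apply/ffunP => W; rewrite !ffunE linearPr. Qed.

HB.instance Definition _ := GRing.isSemilinear.Build F _ _ _ (tau rep)
  (GRing.semilinear_linear tau_is_linear).

Lemma coord_subsp_subproof (S : ksub m l) :
  (<<<<(colsel F S)^T>>%MS>>%MS == <<(colsel F S)^T>>%MS)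
  && (\rank <<(colsel F S)^T>>%MS == l).
Proof. by rewrite genmx_id mxrank_gen eqxx /=; apply: row_free_colsel_tr. Qed.

Definition coord_subsp (S : ksub m l) : subsp F m l :=
  exist (fun A : 'M_m => (<<A>>%MS == A) && (\rank A == l)) _ (coord_subsp_subproof S).

Hypothesis hrep : forall W, row_free (rep W) && (rep W == val W)%MS.

Lemma tau_coord_subsp w S :
  exists2 c, c != 0 & tau rep w (coord_subsp S) = c * wedge_top (wbasis F S) w.
Proof.
have /andP[freeR /andP[sRS _]] := hrep (coord_subsp S).
rewrite genmxE in sRS; have [c c0 decR] := dec_submx freeR sRS.
by exists c; rewrite // ffunE decR dec_colsel_tr linearZl.
Qed.

Lemma tau_inj : (l <= m)%N -> injective (tau rep).
Proof.
move=> hlm; apply: raddf_inj => w /ffunP tau0.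
apply: (@wedge_top_wbasis_nondeg _ _ l); first exact: subnKC.
move=> S; have [c c0] := tau_coord_subsp w S; rewrite tau0 ffunE => /esym/eqP.
by rewrite mulf_eq0 (negbTE c0) => /eqP.
Qed.

End Tau.

Unset Implicit Arguments.
Set Strict Implicit.

Theorem lemma5p1 (F : finFieldType) (m l : nat) (hl1 : (1 <= l)%N) (hlm : (l <= m)%N)
  (rep : subsp F m l -> 'M[F]_(l, m))
  (hrep : forall W, row_free (rep W) && (rep W == val W)%MS)
  (D : {vspace {ffun subsp F m l -> F^o}})
  (hD : forall x, x \in D -> exists w : wedge F m (m - l), tau rep w = x) :
  exists E : {vspace wedge F m l},
    (forall w' : wedge F m l,
        w' \in E <-> (forall w : wedge F m (m - l), tau rep w \in D ->
                       wedge_top w' w = 0)) /\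
    (\dim {: wedge F m l} - \dim E = \dim D)%N /\
    supp_size D = (#|{: subsp F m l}| - #|[set W | dec (rep W) \in E]|)%N.
Proof.
pose Dw := (linfun (tau rep) @^-1: D)%VS.
have memDw w : (w \in Dw) = (tau rep w \in D) by rewrite -memv_preim lfunE.
pose E := annihilator (@wedge_top F m l (m - l)) Dw.
have memE w' : reflect (forall w, tau rep w \in D -> wedge_top w' w = 0) (w' \in E).
  apply: (iffP (mem_annihilator _ _ _)) => E0 w.
    by rewrite -memDw; apply: E0.
  by rewrite memDw; apply: E0.
exists E; split; first by move=> w'; split=> /memE.
split.
  have /lker0P tau_ker0 : injective (linfun (tau rep)).
    by move=> w w'; rewrite !lfunE; apply: tau_inj.
  have D_img : (D <= limg (linfun (tau rep)))%VS.
    by apply/subvP => x /hD[w <-]; rewrite -[tau rep w]lfunE memv_img ?memvf.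
  rewrite -(dim_annihilator (fun y => @wedge_top_nondeg F m l y hlm) Dw) addKn.
  exact: dim_lpreim.
rewrite /supp_size cardsCs; congr (_ - _)%N; apply: eq_card => W; rewrite !inE.
apply/negP/memE => [suppW w wD | E0 /existsP[x /andP[xD]]].
  apply/eqP/negPn/negP => nz; apply: suppW; apply/existsP; exists (tau rep w).
  by rewrite wD ffunE.
have [w defx] := hD x xD.
by rewrite -defx ffunE E0 ?defx ?eqxx.
Qed.
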